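(* Let $\{a_n\}_{n\ge1}$ be a sequence of positive real numbers and let $\lambda>0$. Suppose that \[ \frac{a_{2n}}{a_n}=\frac12-\frac{\beta_1}{\ln(\lambda n)}+\frac{\epsilon_1(n)}{\ln(\lambda n)},\qquad \frac{a_{2n+1}}{a_n}=\frac12-\frac{\beta_2}{\ln(\lambda n)}+\frac{\epsilon_2(n)}{\ln(\lambda n)}, \] where $\beta_1,\beta_2$ are real constants independent of $n$ and $\epsilon_1(n)\to0$, $\epsilon_2(n)\to0$ as $n\to\infty$. Let $m=\min\{\beta_1,\beta_2\}$ and $M=\max\{\beta_1,\beta_2\}$. Then: (i) if $m>\frac{\ln2}{2}$, then $\sum_{n=1}^\infty a_n$ converges; (ii) if $M<\frac{\ln2}{2}$, then $\sum_{n=1}^\infty a_n$ diverges.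
   Context: Here $\ln$ denotes the natural logarithm. *)

From Stdlib Require Import Reals.
From Coquelicot Require Import Coquelicot.

From Stdlib Require Import Reals Lra Lia.
From Coquelicot Require Import Coquelicot.
Open Scope R_scope.

(* Group the series into the dyadic blocks b_k = a_(2^k) + ... + a_(2^(k+1)-1). The
   children 2n, 2n+1 of the indices of block k are exactly the indices of block k+1, and
   adding the two ratio hypotheses gives
     a_(2n) + a_(2n+1) = a_n (1 - (beta1 + beta2 - eps1(n) - eps2(n)) / ln (lam n)).
   Since ln (lam n) = k ln 2 + O(1) on block k, this yields
   b_(k+1) / b_k = 1 - gamma / k + o(1 / k) with gamma = (beta1 + beta2) / ln 2, and
   Raabe's test decides: the blocks (hence the a_n) are summable when beta1 + beta2 > ln 2
   and not when beta1 + beta2 < ln 2. Only the sum beta1 + beta2 matters; the conditions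
   on the minimum and the maximum are used only through it. *)

Lemma pow2_ge1 (k : nat) : (1 <= 2 ^ k)%nat.
Proof. pose proof (Nat.pow_gt_lin_r 2 k). lia. Qed.

Lemma Rdiv_le_compat (x y L M : R) : 0 <= y -> x <= y -> 0 < M <= L -> x / L <= y / M.
Proof.
  intros Hy Hxy HML. apply Rle_trans with (y / L); unfold Rdiv.
  - apply Rmult_le_compat_r; [left; apply Rinv_0_lt_compat|]; lra.
  - apply Rmult_le_compat_l; [|apply Rinv_le_contravar]; lra.
Qed.

Lemma ln_INR_dyadic_bounds (k n : nat) : (2 ^ k <= n <= 2 ^ S k)%nat ->
  INR k * ln 2 <= ln (INR n) <= (INR k + 1) * ln 2.
Proof.
  intros Hn.
  assert (Hpow : forall j, INR (2 ^ j) = 2 ^ j) by (intros; rewrite pow_INR; reflexivity).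
  assert (Hk : 0 < INR (2 ^ k)) by (apply lt_0_INR; pose proof (pow2_ge1 k); lia).
  rewrite <- (S_INR k), <- !ln_pow, <- !Hpow by lra.
  assert (Hkn : INR (2 ^ k) <= INR n) by (apply le_INR; lia).
  split; apply ln_le; try apply le_INR; lia || lra.
Qed.

Lemma sum_n_m_le_loc (u v : nat -> R) (n m : nat) :
  (forall k, (n <= k <= m)%nat -> u k <= v k) -> sum_n_m u n m <= sum_n_m v n m.
Proof.
  induction m as [|m IH]; intros Huv.
  - destruct n as [|n].
    + rewrite !sum_n_n. apply Huv. lia.
    + rewrite !sum_n_m_zero by lia. lra.
  - destruct (Nat.le_gt_cases n (S m)) as [Hn|Hn].
    + rewrite !sum_n_Sm by lia.
      apply Rplus_le_compat; [apply IH | apply Huv]; intros; try apply Huv; lia.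
    + rewrite !sum_n_m_zero by lia. lra.
Qed.

Lemma sum_n_m_nonneg (u : nat -> R) (n m : nat) :
  (forall k, (n <= k <= m)%nat -> 0 <= u k) -> 0 <= sum_n_m u n m.
Proof.
  intros Hu. rewrite <- (Rmult_0_r (INR (S m - n))), <- sum_n_m_const.
  apply sum_n_m_le_loc, Hu.
Qed.

Lemma sum_n_m_le_r (u : nat -> R) (n m m' : nat) :
  (forall k, (n <= k)%nat -> 0 <= u k) -> (n <= S m)%nat -> (m <= m')%nat ->
  sum_n_m u n m <= sum_n_m u n m'.
Proof.
  intros Hu Hn Hm. rewrite (sum_n_m_Chasles u n m m') by lia.
  assert (0 <= sum_n_m u (S m) m') by (apply sum_n_m_nonneg; intros; apply Hu; lia).
  unfold plus; simpl. lra.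
Qed.

Lemma sum_n_m_pairs (u : nat -> R) (m n : nat) : (m <= S n)%nat ->
  sum_n_m u (2 * m) (2 * n + 1) = sum_n_m (fun i => u (2 * i)%nat + u (2 * i + 1)%nat) m n.
Proof.
  induction n as [|n IH]; intros Hm.
  - destruct m as [|[|m]]; [|rewrite !sum_n_m_zero by lia; reflexivity|lia].
    replace (2 * 0 + 1)%nat with 1%nat by lia.
    rewrite sum_n_Sm, !sum_n_n by lia. reflexivity.
  - destruct (Nat.eq_dec m (S (S n))) as [->|Hm'].
    + rewrite !sum_n_m_zero by lia. reflexivity.
    + replace (2 * S n + 1)%nat with (S (S (2 * n + 1))) by lia.
      rewrite sum_n_Sm, sum_n_Sm, (sum_n_Sm _ m n), IH by lia.
      replace (S (S (2 * n + 1))) with (2 * S n + 1)%nat by lia.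
      replace (S (2 * n + 1)) with (2 * S n)%nat by lia.
      unfold plus; simpl. ring.
Qed.

Lemma ex_series_of_bounded_sums (u : nat -> R) (M : R) :
  (forall n, 0 <= u n) -> (forall n, sum_n u n <= M) -> ex_series u.
Proof.
  intros Hu HM.
  destruct (ex_finite_lim_seq_incr (sum_n u) M) as [l Hl]; auto.
  - intros n. rewrite sum_Sn. pose proof (Hu (S n)). unfold plus; simpl. lra.
  - exists l. exact Hl.
Qed.

Lemma sum_n_le_Series (u : nat -> R) :
  (forall n, 0 <= u n) -> ex_series u -> forall n, sum_n u n <= Series u.
Proof.
  intros Hu Hex n. rewrite sum_n_Reals. apply growing_ineq.
  - intros m. simpl. pose proof (Hu (S m)). lra.
  - apply is_series_Reals, Series_correct, Hex.
Qed.

Lemma raabe_ex_series (b : nat -> R) (c gamma : R) (K : nat) :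
  (forall k, 0 <= b k) -> 1 < gamma -> 1 <= INR K + c ->
  (forall k, (K <= k)%nat -> (INR k + c) * b (S k) <= (INR k + c - gamma) * b k) ->
  ex_series b.
Proof.
  intros Hb Hgamma HKc Hstep.
  set (T k := (INR k + c - 1) * b k).
  assert (HT0 : forall k, (K <= k)%nat -> 0 <= T k).
  { intros k Hk. apply Rmult_le_pos; [|apply Hb].
    assert (INR K <= INR k) by (apply le_INR; exact Hk). lra. }
  assert (HT : forall k, (K <= k)%nat -> T (S k) + (gamma - 1) * b k <= T k).
  { intros k Hk. specialize (Hstep k Hk). unfold T. rewrite S_INR. lra. }
  assert (Htel : forall j, (gamma - 1) * sum_n (fun i => b (K + i)%nat) j + T (K + S j)%nat <= T K).
  { induction j as [|j IH].
    - rewrite sum_O, Nat.add_0_r, Nat.add_1_r. specialize (HT K (le_n K)). lra.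
    - rewrite sum_Sn. unfold plus; simpl.
      specialize (HT (K + S j)%nat ltac:(lia)). rewrite <- Nat.add_succ_r in HT. lra. }
  apply (ex_series_incr_n b K), (ex_series_of_bounded_sums _ (T K / (gamma - 1))).
  - intros; apply Hb.
  - intros j. specialize (Htel j). specialize (HT0 (K + S j)%nat ltac:(lia)).
    apply (Rmult_le_reg_l (gamma - 1)); [lra|].
    replace ((gamma - 1) * (T K / (gamma - 1))) with (T K) by (field; lra). lra.
Qed.

Lemma not_ex_series_harmonic_minorant (b : nat -> R) (C tau : R) (K : nat) :
  0 < tau -> (forall k, (K <= k)%nat -> tau <= (INR k + C) * b k) -> ~ ex_series b.
Proof.
  intros Htau Hb Hex.
  destruct (Cauchy_ex_series b Hex (mkposreal (tau / 3) ltac:(lra))) as [N HN].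
  destruct (INR_unbounded (Rabs C)) as [M0 HM0].
  set (M := (M0 + N + K)%nat).
  assert (HM : Rabs C < INR M) by (apply Rlt_le_trans with (INR M0); [lra|apply le_INR; lia]).
  pose proof (Rle_abs C). pose proof (Rle_abs (- C)). rewrite Rabs_Ropp in *.
  (* The Cauchy criterion fails on the window (M, 2M]: its M terms are each >= tau / (3M). *)
  assert (Hterm : forall k, (S M <= k <= 2 * M)%nat -> tau / (3 * INR M) <= b k).
  { intros k Hk. specialize (Hb k ltac:(lia)).
    assert (Hk1 : INR (S M) <= INR k) by (apply le_INR; lia).
    assert (Hk2 : INR k <= INR (2 * M)) by (apply le_INR; lia).
    rewrite mult_INR in Hk2. simpl INR in Hk2.
    rewrite S_INR in Hk1.
    assert (0 <= b k) by (destruct (Rle_or_lt 0 (b k)); [auto|nra]).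
    apply (Rmult_le_reg_l (3 * INR M)); [lra|].
    replace (3 * INR M * (tau / (3 * INR M))) with tau by (field; lra). nra. }
  specialize (HN (S M) (2 * M)%nat ltac:(lia) ltac:(lia)).
  assert (Hsum : tau / 3 <= sum_n_m b (S M) (2 * M)).
  { apply Rle_trans with (sum_n_m (fun _ => tau / (3 * INR M)) (S M) (2 * M)).
    - rewrite sum_n_m_const. replace (S (2 * M) - S M)%nat with M by lia.
      right. field. lra.
    - apply sum_n_m_le_loc, Hterm. }
  change (Rabs (sum_n_m b (S M) (2 * M)) < tau / 3) in HN.
  pose proof (Rle_abs (sum_n_m b (S M) (2 * M))). lra.
Qed.

Lemma raabe_not_ex_series (b : nat -> R) (c gamma : R) (K : nat) :
  (forall k, 0 < b k) -> gamma <= 1 -> 1 < INR K + c ->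
  (forall k, (K <= k)%nat -> (INR k + c - gamma) * b k <= (INR k + c) * b (S k)) ->
  ~ ex_series b.
Proof.
  intros Hb Hgamma HKc Hstep.
  set (T k := (INR k + c - 1) * b k).
  assert (HT : forall j, T K <= T (K + j)%nat).
  { induction j as [|j IH]; [rewrite Nat.add_0_r; lra|].
    specialize (Hstep (K + j)%nat ltac:(lia)). specialize (Hb (K + j)%nat).
    assert (0 <= (1 - gamma) * b (K + j)%nat) by (apply Rmult_le_pos; lra).
    rewrite Nat.add_succ_r. unfold T in *. rewrite S_INR. lra. }
  apply (not_ex_series_harmonic_minorant b (c - 1) (T K) K).
  - unfold T. specialize (Hb K). nra.
  - intros k Hk. specialize (HT (k - K)%nat).
    replace (K + (k - K))%nat with k in HT by lia. unfold T in *. lra.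
Qed.

Definition dyadic_block (a : nat -> R) (k : nat) : R := sum_n_m a (2 ^ k) (2 ^ S k - 1).

Lemma sum_n_dyadic_block (a : nat -> R) (K : nat) :
  sum_n (dyadic_block a) K = sum_n_m a 1 (2 ^ S K - 1).
Proof.
  induction K as [|K IH]; [apply sum_O|].
  rewrite sum_Sn, IH. unfold dyadic_block. pose proof (pow2_ge1 K).
  rewrite (sum_n_m_Chasles a 1 (2 ^ S K - 1) (2 ^ S (S K) - 1)) by (simpl; lia).
  replace (S (2 ^ S K - 1)) with (2 ^ S K)%nat by (simpl; lia). reflexivity.
Qed.

Lemma dyadic_block_succ (a : nat -> R) (k : nat) : dyadic_block a (S k) =
  sum_n_m (fun n => a (2 * n)%nat + a (2 * n + 1)%nat) (2 ^ k) (2 ^ S k - 1).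
Proof.
  pose proof (pow2_ge1 k). unfold dyadic_block.
  rewrite <- sum_n_m_pairs by (simpl; lia). f_equal; simpl; lia.
Qed.

Lemma dyadic_block_pos (a : nat -> R) (k : nat) :
  (forall n, (1 <= n)%nat -> 0 < a n) -> 0 < dyadic_block a k.
Proof.
  intros Ha. pose proof (pow2_ge1 k). unfold dyadic_block.
  rewrite (sum_Sn_m a) by (simpl; lia).
  apply Rplus_lt_le_0_compat; [apply Ha; lia|].
  apply sum_n_m_nonneg. intros; left; apply Ha; lia.
Qed.

Lemma dyadic_block_succ_le (a : nat -> R) (r : R) (k : nat) :
  (forall n, (2 ^ k <= n <= 2 ^ S k - 1)%nat -> a (2 * n)%nat + a (2 * n + 1)%nat <= r * a n) ->
  dyadic_block a (S k) <= r * dyadic_block a k.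
Proof.
  intros Hr. rewrite dyadic_block_succ. unfold dyadic_block.
  rewrite <- (sum_n_m_mult_l (K := R_Ring)). apply sum_n_m_le_loc, Hr.
Qed.

Lemma dyadic_block_succ_ge (a : nat -> R) (r : R) (k : nat) :
  (forall n, (2 ^ k <= n <= 2 ^ S k - 1)%nat -> r * a n <= a (2 * n)%nat + a (2 * n + 1)%nat) ->
  r * dyadic_block a k <= dyadic_block a (S k).
Proof.
  intros Hr. rewrite dyadic_block_succ. unfold dyadic_block.
  rewrite <- (sum_n_m_mult_l (K := R_Ring)). apply sum_n_m_le_loc, Hr.
Qed.

Lemma ex_series_dyadic_block (a : nat -> R) : (forall n, (1 <= n)%nat -> 0 <= a n) ->
  ex_series (fun n => a (S n)) <-> ex_series (dyadic_block a).
Proof.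
  intros Ha.
  assert (Hsum : forall m, sum_n (fun n => a (S n)) m = sum_n_m a 1 (S m)) by apply sum_n_m_S.
  assert (Hb : forall k, 0 <= dyadic_block a k).
  { intros k. apply sum_n_m_nonneg. intros; apply Ha. pose proof (pow2_ge1 k). lia. }
  split; intros Hex.
  - apply (ex_series_of_bounded_sums _ (Series (fun n => a (S n)))); [exact Hb|].
    intros K. rewrite sum_n_dyadic_block.
    pose proof (Nat.pow_gt_lin_r 2 (S K)).
    replace (2 ^ S K - 1)%nat with (S (2 ^ S K - 2)) by lia.
    rewrite <- Hsum. apply sum_n_le_Series; [intros; apply Ha; lia | exact Hex].
  - apply (ex_series_of_bounded_sums _ (Series (dyadic_block a))); [intros; apply Ha; lia|].
    intros N. rewrite Hsum.
    apply Rle_trans with (sum_n (dyadic_block a) N).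
    + rewrite sum_n_dyadic_block. apply sum_n_m_le_r; [exact Ha|lia|].
      pose proof (Nat.pow_gt_lin_r 2 (S N)). lia.
    + apply sum_n_le_Series; assumption.
Qed.

Section DyadicBlockRatio.

Variables (a : nat -> R) (lam B : R) (e : nat -> R).
Hypothesis Hpos : forall n, (1 <= n)%nat -> 0 < a n.
Hypothesis Hlam : 0 < lam.
Hypothesis He : is_lim_seq e 0.
Hypothesis Hpair : forall n, (1 <= n)%nat ->
  a (2 * n)%nat + a (2 * n + 1)%nat = (1 - (B - e n) / ln (lam * INR n)) * a n.

Lemma ln_lam_dyadic_bounds (k n : nat) : (2 ^ k <= n <= 2 ^ S k)%nat ->
  (INR k - Rabs (ln lam) / ln 2) * ln 2 <= ln (lam * INR n)
  <= (INR k + 1 + Rabs (ln lam) / ln 2) * ln 2.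
Proof.
  intros Hn. pose proof ln_lt_2.
  assert (0 < INR n) by (apply lt_0_INR; pose proof (pow2_ge1 k); lia).
  pose proof (ln_INR_dyadic_bounds k n Hn).
  pose proof (Rle_abs (ln lam)). pose proof (Rle_abs (- ln lam)). rewrite Rabs_Ropp in *.
  rewrite Rmult_minus_distr_r, !Rmult_plus_distr_r.
  replace (Rabs (ln lam) / ln 2 * ln 2) with (Rabs (ln lam)) by (field; lra).
  rewrite ln_mult by lra. lra.
Qed.

Lemma eventually_small_error (delta : R) : 0 < delta ->
  exists N, forall n, (N <= n)%nat -> Rabs (e n) < delta.
Proof.
  intros Hdelta. apply is_lim_seq_spec in He.
  destruct (He (mkposreal delta Hdelta)) as [N HN].
  exists N. intros n Hn. specialize (HN n Hn). simpl in HN. rewrite Rminus_0_r in HN. exact HN.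
Qed.

Lemma dyadic_block_raabe_upper : ln 2 < B -> exists K c gamma,
  1 < gamma /\ 1 <= INR K + c /\ forall k, (K <= k)%nat ->
  (INR k + c) * dyadic_block a (S k) <= (INR k + c - gamma) * dyadic_block a k.
Proof.
  intros HB. pose proof ln_lt_2.
  set (A := Rabs (ln lam) / ln 2).
  assert (HA : 0 <= A) by (apply Rle_mult_inv_pos; [apply Rabs_pos|lra]).
  set (delta := (B - ln 2) / 2).
  set (gamma := (B - delta) / ln 2).
  assert (Hgamma : gamma * ln 2 = B - delta) by (unfold gamma; field; lra).
  destruct (eventually_small_error delta ltac:(unfold delta; lra)) as [N HN].
  destruct (INR_unbounded A) as [K0 HK0].
  exists (N + K0)%nat, (1 + A), gamma.
  split; [unfold delta in Hgamma; nra|].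
  split; [pose proof (pos_INR (N + K0)); lra|].
  intros k Hk.
  assert (HkA : A < INR k) by (apply Rlt_le_trans with (INR K0); [lra|apply le_INR; lia]).
  assert (Hratio : dyadic_block a (S k) <= (1 - gamma / (INR k + (1 + A))) * dyadic_block a k).
  { apply dyadic_block_succ_le. intros n Hn.
    pose proof (Nat.pow_gt_lin_r 2 k).
    rewrite Hpair by lia. apply Rmult_le_compat_r; [left; apply Hpos; lia|].
    apply Rplus_le_compat_l, Ropp_le_contravar.
    destruct (Rabs_def2 _ _ (HN n ltac:(lia))).
    destruct (ln_lam_dyadic_bounds k n ltac:(lia)) as [HL1 HL2]. fold A in HL1, HL2.
    assert (HL0 : 0 < (INR k - A) * ln 2) by (apply Rmult_lt_0_compat; lra).
    replace (gamma / (INR k + (1 + A))) with ((B - delta) / ((INR k + 1 + A) * ln 2))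
      by (rewrite <- Hgamma; field; lra).
    apply Rdiv_le_compat; unfold delta in *; [lra | lra | split; lra]. }
  pose proof (dyadic_block_pos a k Hpos).
  replace (INR k + (1 + A) - gamma) with ((INR k + (1 + A)) * (1 - gamma / (INR k + (1 + A))))
    by (field; lra).
  rewrite Rmult_assoc. apply Rmult_le_compat_l; lra.
Qed.

Lemma dyadic_block_raabe_lower : B < ln 2 -> exists K c gamma,
  gamma <= 1 /\ 1 < INR K + c /\ forall k, (K <= k)%nat ->
  (INR k + c - gamma) * dyadic_block a k <= (INR k + c) * dyadic_block a (S k).
Proof.
  intros HB. pose proof ln_lt_2.
  set (A := Rabs (ln lam) / ln 2).
  assert (HA : 0 <= A) by (apply Rle_mult_inv_pos; [apply Rabs_pos|lra]).
  set (delta := (ln 2 - B) / 2).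
  (* the positive part keeps the numerator nonnegative when B is very negative *)
  set (gamma := Rmax (B + delta) 0 / ln 2).
  assert (Hgamma : gamma * ln 2 = Rmax (B + delta) 0) by (unfold gamma; field; lra).
  pose proof (Rmax_l (B + delta) 0). pose proof (Rmax_r (B + delta) 0).
  assert (Hmax : Rmax (B + delta) 0 < ln 2) by (apply Rmax_lub_lt; unfold delta; lra).
  destruct (eventually_small_error delta ltac:(unfold delta; lra)) as [N HN].
  destruct (INR_unbounded (A + 1)) as [K0 HK0].
  exists (N + K0)%nat, (- A), gamma.
  split; [nra|].
  split; [assert (INR K0 <= INR (N + K0)) by (apply le_INR; lia); lra|].
  intros k Hk.
  assert (HkA : A + 1 < INR k) by (apply Rlt_le_trans with (INR K0); [lra|apply le_INR; lia]).
  assert (Hratio : (1 - gamma / (INR k + - A)) * dyadic_block a k <= dyadic_block a (S k)).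
  { apply dyadic_block_succ_ge. intros n Hn.
    pose proof (Nat.pow_gt_lin_r 2 k).
    rewrite Hpair by lia. apply Rmult_le_compat_r; [left; apply Hpos; lia|].
    apply Rplus_le_compat_l, Ropp_le_contravar.
    destruct (Rabs_def2 _ _ (HN n ltac:(lia))).
    destruct (ln_lam_dyadic_bounds k n ltac:(lia)) as [HL1 HL2]. fold A in HL1, HL2.
    assert (HL0 : 0 < (INR k - A) * ln 2) by (apply Rmult_lt_0_compat; lra).
    replace (gamma / (INR k + - A)) with (Rmax (B + delta) 0 / ((INR k - A) * ln 2))
      by (rewrite <- Hgamma; field; lra).
    apply Rdiv_le_compat; [lra | lra | split; lra]. }
  pose proof (dyadic_block_pos a k Hpos).
  replace (INR k + - A - gamma) with ((INR k + - A) * (1 - gamma / (INR k + - A)))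
    by (field; lra).
  rewrite Rmult_assoc. apply Rmult_le_compat_l; lra.
Qed.

End DyadicBlockRatio.

Lemma child_sum_eq (a : nat -> R) (n : nat) (L b1 b2 e1 e2 : R) : 0 < a n ->
  a (2 * n)%nat / a n = / 2 - b1 / L + e1 / L ->
  a (2 * n + 1)%nat / a n = / 2 - b2 / L + e2 / L ->
  a (2 * n)%nat + a (2 * n + 1)%nat = (1 - (b1 + b2 - (e1 + e2)) / L) * a n.
Proof.
  intros Ha Heven Hodd.
  replace (a (2 * n)%nat) with (a (2 * n)%nat / a n * a n) by (field; lra).
  replace (a (2 * n + 1)%nat) with (a (2 * n + 1)%nat / a n * a n) by (field; lra).
  rewrite Heven, Hodd. replace 1 with (/ 2 + / 2) by lra. unfold Rdiv. ring.
Qed.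

Theorem corollary2p1p1 (a : nat -> R) (lam beta1 beta2 : R)
  (eps1 eps2 : nat -> R)
  (Hpos : forall n : nat, (1 <= n)%nat -> 0 < a n)
  (Hlam : 0 < lam)
  (Heps1 : is_lim_seq eps1 0)
  (Heps2 : is_lim_seq eps2 0)
  (Heven : forall n : nat, (1 <= n)%nat ->
     a (2 * n)%nat / a n
     = / 2 - beta1 / ln (lam * INR n) + eps1 n / ln (lam * INR n))
  (Hodd : forall n : nat, (1 <= n)%nat ->
     a (2 * n + 1)%nat / a n
     = / 2 - beta2 / ln (lam * INR n) + eps2 n / ln (lam * INR n)) :
  (ln 2 / 2 < Rmin beta1 beta2 -> ex_series (fun k => a (S k))) /\
  (Rmax beta1 beta2 < ln 2 / 2 -> ~ ex_series (fun k => a (S k))).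
Proof.
  set (e n := eps1 n + eps2 n).
  assert (He : is_lim_seq e 0).
  { rewrite <- (Rplus_0_r 0). apply is_lim_seq_plus'; assumption. }
  assert (Hpair : forall n, (1 <= n)%nat -> a (2 * n)%nat + a (2 * n + 1)%nat
    = (1 - (beta1 + beta2 - e n) / ln (lam * INR n)) * a n).
  { intros n Hn. apply child_sum_eq; auto. }
  assert (Hblock : forall k, 0 < dyadic_block a k) by (intros; apply dyadic_block_pos, Hpos).
  rewrite ex_series_dyadic_block by (intros; left; apply Hpos; assumption).
  pose proof (Rmin_l beta1 beta2). pose proof (Rmin_r beta1 beta2).
  pose proof (Rmax_l beta1 beta2). pose proof (Rmax_r beta1 beta2).
  split; intros Hbeta.
  - destruct (dyadic_block_raabe_upper a lam (beta1 + beta2) e Hpos Hlam He Hpair)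
      as (K & c & gamma & Hgamma & HKc & Hstep); [lra|].
    apply (raabe_ex_series _ c gamma K); auto using Rlt_le.
  - destruct (dyadic_block_raabe_lower a lam (beta1 + beta2) e Hpos Hlam He Hpair)
      as (K & c & gamma & Hgamma & HKc & Hstep); [lra|].
    apply (raabe_not_ex_series _ c gamma K); auto.
Qed.
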